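(* For every natural number $n\geq 1$, $\tau(B_n) > B_{\lfloor \tau(n)/3\rfloor}$, where $\lfloor\cdot\rfloor$ denotes the floor function.
   Context: The balancing numbers $(B_n)_{n\geq 0}$ are defined by $B_0=0$, $B_1=1$, $B_{n+1}=6B_n-B_{n-1}$ for $n\geq 1$. For a positive integer $m$, $\tau(m)$ denotes the number of positive divisors of $m$. *)

From mathcomp Require Import all_boot.
Set Implicit Arguments. Unset Strict Implicit. Unset Printing Implicit Defensive.

(* Balancing numbers: B_0 = 0, B_1 = 1, B_{n+1} = 6 B_n - B_{n-1}.
   The sequence is strictly increasing and nonnegative, so the truncated
   nat subtraction is exact. *)
Fixpoint balancing (n : nat) : nat :=
  match n with
  | 0 => 0
  | 1 => 1
  | (m.+1 as k).+1 => 6 * balancing k - balancing m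
  end.

Definition tau (m : nat) : nat := size (divisors m).

(* With alpha, beta = 3 +- 2 sqrt 2 we have (alpha - beta) B_n = alpha^n - beta^n, so B_n is the
   product, over the divisors d > 1 of n, of the integers |beta^phi(d) Phi_d(alpha^2)|, where
   Phi_d is the d-th cyclotomic polynomial.  Each of these factors, for d > 1, has a primitive
   prime divisor p, i.e. one dividing no B_m with 0 < m < d: otherwise every prime factor p
   of the factor is a prime q of d with p | B_(d/q), and expanding B_(qm) / B_m = q C_m^(q-1)
   mod B_m^2 (C the companion Lucas sequence) shows that p divides it only once; the factor
   would then divide d, whereas it is at least 5^phi(d) > d.  By strong divisibility,
   gcd(B_m, B_n) = B_gcd(m,n), distinct d have distinct primitive primes, so B_n has at least
   tau(n) - 1 prime factors and tau(B_n) >= 2^(tau(n)-1) > 6^(k-1) >= B_k for 3k <= tau(n). *)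

From mathcomp Require Import all_boot all_order all_algebra all_field.
From mathcomp Require Import ring zify.
Set Implicit Arguments. Unset Strict Implicit. Unset Printing Implicit Defensive.
Import Order.TTheory GRing.Theory Num.Theory.

Local Notation B := balancing.

Fixpoint lucas_balancing (n : nat) : nat :=
  match n with
  | 0 => 1
  | 1 => 3
  | (m.+1 as k).+1 => 6 * lucas_balancing k - lucas_balancing m
  end.
Local Notation C := lucas_balancing.

Lemma balancingSS n : B n.+2 = 6 * B n.+1 - B n. Proof. by []. Qed.
Lemma lucas_balancingSS n : C n.+2 = 6 * C n.+1 - C n. Proof. by []. Qed.

Lemma balancing_leS n : B n <= B n.+1.
Proof. by elim: n => [|n IHn] //; rewrite balancingSS; lia. Qed.

Lemma lucas_balancing_leS n : C n <= C n.+1.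
Proof. by elim: n => [|n IHn] //; rewrite lucas_balancingSS; lia. Qed.

Lemma balancing_gt0 n : 0 < n -> 0 < B n.
Proof. by case: n => // n _; elim: n => // n IHn; apply: leq_trans IHn (balancing_leS _). Qed.

Lemma balancing_le_exp6 k : B k.+1 <= 6 ^ k.
Proof. by elim: k => [|k IHk] //; rewrite balancingSS expnS; lia. Qed.

Lemma balancing_lt_exp2 k : B k < 2 ^ (3 * k).-1.
Proof.
case: k => [|k] //; apply: leq_ltn_trans (balancing_le_exp6 k) _.
have le68 j : 6 ^ j <= 8 ^ j by elim: j => // j IHj; rewrite !expnS leq_mul.
have -> : (3 * k.+1).-1 = (3 * k).+2 by rewrite mulnS.
by rewrite !expnS expnM (_ : 2 ^ 3 = 8) //; have := le68 k; have := expn_gt0 8 k; lia.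
Qed.

Section Binet.
Local Open Scope ring_scope.

Definition sqrt2 : algC := sqrtC 2.
Definition alpha : algC := 3 + 2 * sqrt2.
Definition beta : algC := 3 - 2 * sqrt2.

Lemma sqrt2K : sqrt2 ^+ 2 = 2. Proof. exact: sqrtCK. Qed.

Lemma sqrt2_ge0 : 0 <= sqrt2. Proof. by rewrite sqrtC_ge0 ler0n. Qed.

Lemma alphaMbeta : alpha * beta = 1.
Proof.
have -> : alpha * beta = 9 - 4 * sqrt2 ^+ 2 by rewrite /alpha /beta; ring.
by rewrite sqrt2K; ring.
Qed.

Lemma alpha_sqr : alpha ^+ 2 = 6 * alpha - 1.
Proof.
have -> : alpha ^+ 2 = 6 * alpha - 1 + 4 * (sqrt2 ^+ 2 - 2) by rewrite /alpha; ring.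
by rewrite sqrt2K subrr mulr0 addr0.
Qed.

Lemma beta_sqr : beta ^+ 2 = 6 * beta - 1.
Proof.
have -> : beta ^+ 2 = 6 * beta - 1 + 4 * (sqrt2 ^+ 2 - 2) by rewrite /beta; ring.
by rewrite sqrt2K subrr mulr0 addr0.
Qed.

Lemma alpha_sub_beta : alpha - beta = 4 * sqrt2.
Proof. by rewrite /alpha /beta; ring. Qed.

Lemma sqr_alpha_sub_beta : (alpha - beta) ^+ 2 = 32.
Proof. by rewrite alpha_sub_beta exprMn sqrt2K; ring. Qed.

Lemma alpha_sub_beta_neq0 : alpha - beta != 0.
Proof. by rewrite alpha_sub_beta mulf_neq0 ?pnatr_eq0 // sqrtC_eq0 pnatr_eq0. Qed.

Lemma natr_recurrence6 (u : nat -> nat) (a b : algC) :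
    (forall n, u n.+2 = 6 * u n.+1 - u n)%N -> (forall n, u n <= u n.+1)%N ->
    (u 0)%:R = a + b -> (u 1)%:R = a * alpha + b * beta ->
  forall n, (u n)%:R = a * alpha ^+ n + b * beta ^+ n.
Proof.
move=> uSS u_le u0 u1 n.
suff : (u n)%:R = a * alpha ^+ n + b * beta ^+ n /\
       (u n.+1)%:R = a * alpha ^+ n.+1 + b * beta ^+ n.+1 by case.
elim: n => [|n [IH0 IH1]]; first by rewrite !expr0 !expr1 !mulr1.
split=> //; rewrite uSS natrB; last by rewrite (leq_trans (u_le n)) ?leq_pmull.
by rewrite natrM IH0 IH1 -[n.+2]addn2 !exprD alpha_sqr beta_sqr !exprS; ring.
Qed.

Lemma balancing_Binet n : (B n)%:R = (alpha ^+ n - beta ^+ n) / (alpha - beta).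
Proof.
have d0 := alpha_sub_beta_neq0.
rewrite (@natr_recurrence6 B (alpha - beta)^-1 (- (alpha - beta)^-1)) //.
- by field.
- exact: balancing_leS.
- by rewrite addrN.
- by rewrite /=; field.
Qed.

Lemma lucas_balancing_Binet n : (C n)%:R = (alpha ^+ n + beta ^+ n) / 2.
Proof.
have two0 : 2 != 0 :> algC by rewrite pnatr_eq0.
rewrite (@natr_recurrence6 C 2^-1 2^-1) //.
- by field.
- exact: lucas_balancing_leS.
- by rewrite /=; field.
- by rewrite /alpha /beta /=; field.
Qed.

Lemma balancingD m n : B (m + n) = (B m * C n + B n * C m)%N.
Proof.
apply/eqP; rewrite -(eqr_nat algC) natrD !natrM !balancing_Binet.
rewrite !lucas_balancing_Binet !exprD; apply/eqP.
by field; exact: alpha_sub_beta_neq0.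
Qed.

Lemma lucas_balancingD m n : C (m + n) = (C m * C n + 8 * B m * B n)%N.
Proof.
apply/eqP; rewrite -(eqr_nat algC) natrD !natrM !balancing_Binet.
rewrite !lucas_balancing_Binet !exprD; apply/eqP.
rewrite (_ : 8%:R = (alpha - beta) ^+ 2 / 4); last by rewrite sqr_alpha_sub_beta; field.
by field; exact: alpha_sub_beta_neq0.
Qed.

Lemma lucas_balancing_sqr n : (C n ^ 2 = 8 * B n ^ 2 + 1)%N.
Proof.
apply/eqP; rewrite -(eqr_nat algC) !natrX natrD natrM natrX.
rewrite balancing_Binet lucas_balancing_Binet; apply/eqP.
rewrite (_ : 8%:R = (alpha - beta) ^+ 2 / 4); last by rewrite sqr_alpha_sub_beta; field.
rewrite (_ : 1%:R = alpha ^+ n * beta ^+ n); last by rewrite -exprMn alphaMbeta expr1n.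
by field; exact: alpha_sub_beta_neq0.
Qed.

End Binet.

Lemma coprime_balancing_lucas n : coprime (B n) (C n).
Proof.
rewrite /coprime; set g := gcdn _ _.
have gC2 : g %| C n ^ 2 by rewrite dvdn_exp // dvdn_gcdr.
have gB2 : g %| 8 * B n ^ 2 by rewrite dvdn_mull // dvdn_exp // dvdn_gcdl.
by move: gC2; rewrite lucas_balancing_sqr dvdn_addr // dvdn1.
Qed.

Lemma gcdn_balancingDl m n : gcdn (B (m + n)) (B n) = gcdn (B m) (B n).
Proof.
rewrite balancingD gcdnC addnC [B n * _]mulnC gcdnMDl Gauss_gcdl 1?gcdnC //.
exact: coprime_balancing_lucas.
Qed.

Lemma gcdn_balancing m n : gcdn (B m) (B n) = B (gcdn m n).
Proof.
have [k] := ubnP (m + n); elim: k m n => [|k IHk] [|m] [|n] // lt_mn_k;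
  rewrite ?gcd0n ?gcdn0 //.
have [le_mn | lt_nm] := leqP m n.
  rewrite -(subnK le_mn) -addnS gcdnC gcdn_balancingDl IHk; last by lia.
  by rewrite gcdnDr gcdnC.
rewrite -(subnK (ltnW lt_nm)) -addnS gcdn_balancingDl IHk; last by lia.
by rewrite [in RHS]gcdnC gcdnDr gcdnC.
Qed.

Lemma balancing_dvd d n : d %| n -> B d %| B n.
Proof. by move=> dvd_dn; apply/gcdn_idPl; rewrite gcdn_balancing (gcdn_idPl dvd_dn). Qed.

(* The second equation is only there to carry the induction. *)
Lemma balancing_mul_expand k m : exists X Y,
  B (k.+1 * m) = k.+1 * C m ^ k * B m + B m ^ 3 * X /\
  C (k.+1 * m) = C m ^ k.+1 + B m ^ 2 * Y.
Proof.
elim: k => [|k [X [Y [eB eC]]]]; first by exists 0, 0; rewrite !mul1n !muln0 !addn0.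
exists (X * C m + Y), (Y * C m + 8 * k.+1 * C m ^ k + 8 * B m ^ 2 * X).
by rewrite mulSn addnC balancingD lucas_balancingD eB eC; split; rewrite !expnS; ring.
Qed.

Lemma prime_dvd_balancing_quotient p q m F :
    prime p -> prime q -> 0 < m -> p %| B m ->
    F * B m %| B (q * m) -> p %| F -> p = q /\ ~~ (p ^ 2 %| F).
Proof.
move=> p_pr q_pr m_gt0 p_Bm.
have [k def_q] : exists k, q = k.+1 by exists q.-1; rewrite prednK ?prime_gt0.
have [X [_ [eB _]]] := balancing_mul_expand k m.
have -> : B (q * m) = (q * C m ^ k + B m ^ 2 * X) * B m by rewrite def_q eB; ring.
rewrite dvdn_pmul2r ?balancing_gt0 // => F_quo p_F.
have p_Cm : ~~ (p %| C m).
  by rewrite -prime_coprime // (coprime_dvdl p_Bm) ?coprime_balancing_lucas.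
have p_B2X : p %| B m ^ 2 * X by rewrite dvdn_mulr // dvdn_exp.
have p_eq_q : p = q.
  have : p %| q * C m ^ k by rewrite -(dvdn_addl _ p_B2X) (dvdn_trans p_F F_quo).
  rewrite Euclid_dvdM // Euclid_dvdX // (negbTE p_Cm) orbF.
  by rewrite dvdn_prime2 // => /eqP.
split=> //; apply/negP => p2_F.
have p2_B2X : p ^ 2 %| B m ^ 2 * X by rewrite dvdn_mulr // dvdn_exp2r.
have : p ^ 2 %| q * C m ^ k by rewrite -(dvdn_addl _ p2_B2X) (dvdn_trans p2_F F_quo).
rewrite Gauss_dvdl; last by rewrite coprimeXl // coprimeXr // prime_coprime.
by rewrite -p_eq_q -{2}(expn1 p) dvdn_Pexp2l // prime_gt1.
Qed.

Lemma big_divisors_gt1D1 (R : Type) (idx : R) (op : Monoid.com_law idx) d (F : nat -> R) :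
    1 < d ->
  \big[op/idx]_(e <- divisors d | 1 < e) F e =
  op (F d) (\big[op/idx]_(e <- divisors d | (1 < e) && (e != d)) F e).
Proof.
move=> d_gt1; rewrite -big_filter (bigD1_seq d) ?filter_uniq ?divisors_uniq //.
  by rewrite big_filter_cond.
by rewrite mem_filter d_gt1 -dvdn_divisors ?dvdnn //; apply: ltnW.
Qed.

Lemma sum_totient_divisors n : 0 < n -> \sum_(d <- divisors n) totient d = n.
Proof.
move=> n_gt0; have := congr1 (fun p : {poly int} => size p) (prod_Cyclotomic n_gt0).
rewrite -polyC1 size_XnsubC // size_prod_seq => [|d _]; last exact/monic_neq0/Cyclotomic_monic.
under eq_bigr do rewrite size_Cyclotomic -addn1.
by rewrite big_split /= sum1_size -addSn addnK => -[].
Qed.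

Section CyclotomicFactors.
Local Open Scope ring_scope.

(* As alpha / beta = alpha^2, this is the homogenised value beta^phi(d) Phi_d(alpha / beta). *)
Definition cyclo_balancingC d : algC :=
  (map_poly intr 'Phi_d).[alpha ^+ 2] * beta ^+ totient d.

Lemma prod_cyclo_balancingC n : (0 < n)%N ->
  \prod_(d <- divisors n) cyclo_balancingC d = (alpha - beta) * (B n)%:R.
Proof.
move=> n_gt0; rewrite big_split /= -horner_prod -rmorph_prod prod_Cyclotomic //.
rewrite prodrXr sum_totient_divisors // rmorphB /= map_polyXn rmorph1 hornerE hornerXn.
rewrite [RHS]mulrC balancing_Binet mulfVK ?alpha_sub_beta_neq0 // hornerN hornerC.
by rewrite mulrBl mul1r -exprM mulnC exprM expr2 -mulrA -exprMn alphaMbeta expr1n mulr1.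
Qed.

Lemma cyclo_balancingC1 : cyclo_balancingC 1 = alpha - beta.
Proof.
have Phi1 : 'Phi_1 = 'X - 1.
  by have := prod_Cyclotomic (ltn0Sn 0); rewrite (_ : divisors 1 = [:: 1%N]) // big_seq1 expr1.
rewrite /cyclo_balancingC Phi1 rmorphB /= map_polyX rmorph1 hornerD hornerN hornerX hornerC.
by rewrite (_ : totient 1 = 1%N) // expr1 mulrBl mul1r expr2 -mulrA alphaMbeta mulr1.
Qed.

Lemma prod_cyclo_balancingC_gt1 n : (0 < n)%N ->
  \prod_(d <- divisors n | (1 < d)%N) cyclo_balancingC d = (B n)%:R.
Proof.
move=> n_gt0; apply: (mulfI alpha_sub_beta_neq0); rewrite -prod_cyclo_balancingC //.
rewrite -cyclo_balancingC1 (bigD1_seq 1%N) ?divisor1 ?divisors_uniq //=; congr (_ * _).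
rewrite big_seq_cond [RHS]big_seq_cond; apply: eq_bigl => d.
case dvd_dn: (d \in divisors n) => //=.
have : (0 < d)%N by apply: (dvdn_gt0 n_gt0); rewrite dvdn_divisors.
by case: d {dvd_dn} => [|[|d]].
Qed.

Lemma alpha_ge1 : 1 <= alpha.
Proof. by rewrite ler_wpDr ?mulr_ge0 ?sqrt2_ge0 ?ler1n. Qed.

Lemma alpha_sqr_ge1 : 1 <= alpha ^+ 2.
Proof. by rewrite -(expr1n _ 2%N) lerXn2r ?nnegrE ?alpha_ge1 ?(le_trans ler01 alpha_ge1). Qed.

Lemma beta_gt0 : 0 < beta.
Proof. by rewrite -(pmulr_rgt0 _ (lt_le_trans ltr01 alpha_ge1)) alphaMbeta ltr01. Qed.

Lemma five_le_alpha_sub_beta : 5 <= alpha - beta.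
Proof.
have ge0 : 0 <= alpha - beta by rewrite alpha_sub_beta mulr_ge0 ?sqrt2_ge0.
by rewrite -ler_sqr ?nnegrE // sqr_alpha_sub_beta -natrX ler_nat.
Qed.

Lemma norm_cyclo_balancingC_ge d : (0 < d)%N -> 5 ^+ totient d <= `|cyclo_balancingC d|.
Proof.
(* Each (alpha^2 - z) beta, z a root of unity, has norm >= (alpha^2 - 1) beta = alpha - beta. *)
move=> d_gt0; have [z z_prim] := C_prim_root_exists d_gt0.
have norm_z : `|z| = 1.
  apply/eqP; rewrite -(pexpr_eq1 d_gt0) ?normr_ge0 // -normrX.
  by rewrite (prim_expr_order z_prim) normr1.
have card_coprime : #|[pred k : 'I_d | coprime k d]| = totient d.
  rewrite totient_count_coprime -big_mkcond big_mkord -sum1_card.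
  by apply: eq_bigl => k; rewrite coprime_sym.
rewrite /cyclo_balancingC (Cintr_Cyclotomic z_prim) /cyclotomic horner_prod.
rewrite normrM normr_prod normrX (gtr0_norm beta_gt0).
apply: (@le_trans _ _ ((alpha ^+ 2 - 1) ^+ totient d * beta ^+ totient d)).
  rewrite -exprMn mulrBl mul1r expr2 -mulrA alphaMbeta mulr1.
  by rewrite lerXn2r ?nnegrE ?five_le_alpha_sub_beta ?(le_trans _ five_le_alpha_sub_beta).
rewrite ler_wpM2r ?exprn_ge0 ?(ltW beta_gt0) // -card_coprime -prodr_const.
apply: ler_prod => k _; rewrite subr_ge0 alpha_sqr_ge1 hornerXsubC /=.
apply: le_trans (lerB_dist _ _).
by rewrite (normrX _ z) norm_z expr1n ger0_norm ?(le_trans ler01 alpha_sqr_ge1).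
Qed.

Lemma cyclo_balancingC_neq0 d : (0 < d)%N -> cyclo_balancingC d != 0.
Proof.
move=> d_gt0; rewrite -normr_gt0; apply: lt_le_trans (norm_cyclo_balancingC_ge d_gt0).
by rewrite exprn_gt0 // ltr0n.
Qed.

Lemma cyclo_balancingC_Aint d : cyclo_balancingC d \in Aint.
Proof.
have sqrt2_Aint : sqrt2 \in Aint.
  apply: (@root_monic_Aint ('X^2 - 2%:P)); first by rewrite /root !hornerE sqrt2K subrr.
    exact: monicXnsubC.
  apply/polyOverP => i; rewrite coefB coefXn coefC rpredB ?rpred_nat //.
  by case: (i == 0%N); rewrite ?rpred_nat ?rpred0.
have alpha_Aint : alpha \in Aint by rewrite rpredD ?rpredM ?rpred_nat.
have beta_Aint : beta \in Aint by rewrite rpredB ?rpredM ?rpred_nat.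
rewrite rpredM ?rpredX // rpred_horner ?rpredX //.
by apply/polyOverP => i; rewrite coef_map /= Aint_int.
Qed.

Lemma cyclo_balancingC_rat d : (1 < d)%N -> cyclo_balancingC d \in Crat.
Proof.
elim/ltn_ind: d => d IHd d_gt1; have d_gt0 := ltnW d_gt1.
have := prod_cyclo_balancingC_gt1 d_gt0.
rewrite big_divisors_gt1D1 // => /(canRL (mulfK _)) ->.
  rewrite rpred_div ?rpred_nat // big_seq_cond rpred_prod // => e.
  case/andP=> e_d /andP[e_gt1 e_neq_d].
  by apply: IHd; rewrite // ltn_neqAle e_neq_d dvdn_leq // dvdn_divisors.
rewrite prodf_seq_neq0; apply/allP => e _; apply/implyP => /andP[e_gt1 _].
exact/cyclo_balancingC_neq0/ltnW.
Qed.

Definition cyclo_balancing d : nat := Num.truncn `|cyclo_balancingC d|.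

Lemma natr_cyclo_balancing d : (1 < d)%N -> (cyclo_balancing d)%:R = `|cyclo_balancingC d|.
Proof.
move=> d_gt1; rewrite truncnK // natr_norm_int //.
by rewrite Cint_rat_Aint ?cyclo_balancingC_rat ?cyclo_balancingC_Aint.
Qed.

End CyclotomicFactors.

Lemma cyclo_balancing_ge d : 1 < d -> 5 ^ totient d <= cyclo_balancing d.
Proof.
move=> d_gt1; rewrite -(ler_nat algC) natr_cyclo_balancing // natrX.
exact/norm_cyclo_balancingC_ge/ltnW.
Qed.

Lemma balancing_prod_cyclo n : 0 < n ->
  B n = \prod_(d <- divisors n | 1 < d) cyclo_balancing d.
Proof.
move=> n_gt0; apply/eqP; rewrite -(eqr_nat algC) natr_prod; apply/eqP.
rewrite -[LHS]ger0_norm ?ler0n // -prod_cyclo_balancingC_gt1 // normr_prod.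
rewrite big_seq_cond [RHS]big_seq_cond; apply: eq_bigr => d /andP[_ d_gt1].
by rewrite natr_cyclo_balancing.
Qed.

Lemma mul4_lt_exp5 k : 4 * k < 5 ^ k.
Proof. by elim: k => [|k IHk] //; rewrite expnS; lia. Qed.

Lemma leq_mul_exp_pred c a b x y : 0 < c -> 0 < x -> 0 < y ->
  a <= c ^ x.-1 -> b <= c ^ y.-1 -> a * b <= c ^ (x * y).-1.
Proof.
move=> c_gt0 x_gt0 y_gt0 le_a le_b; apply: leq_trans (leq_mul le_a le_b) _.
by rewrite -expnD leq_pexp2l //; nia.
Qed.

Lemma odd_prime_power_le_exp5 p a : prime p -> 2 < p -> 0 < a ->
  p ^ a <= 5 ^ (totient (p ^ a)).-1.
Proof.
move=> p_pr p_gt2 a_gt0; rewrite totient_pfactor // -{1}(prednK a_gt0) expnS.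
have t_gt0 : 0 < p ^ a.-1 by rewrite expn_gt0 prime_gt0.
move: (p ^ a.-1) t_gt0 => t t_gt0.
by have := mul4_lt_exp5 (p.-1 * t).-1; nia.
Qed.

Lemma odd_le_exp5_totient m : odd m -> m <= 5 ^ (totient m).-1.
Proof.
elim/ltn_ind: m => m IHm m_odd; have m_gt0 : 0 < m by case: m m_odd {IHm}.
have [m_le1 | m_gt1] := leqP m 1; first by rewrite (_ : m = 1) //; lia.
have p_pr := pdiv_prime m_gt1; have p_m := pdiv_dvd m; set p := pdiv m in p_pr p_m *.
have p_gt2 : 2 < p.
  rewrite ltn_neqAle prime_gt1 // andbT.
  by apply: contraTneq m_odd => two_p; rewrite -dvdn2 two_p.
have [m' co_pm' def_m] := pfactor_coprime p_pr m_gt0.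
have a_gt0 : 0 < logn p m by rewrite logn_gt0 mem_primes p_pr m_gt0.
have m'_gt0 : 0 < m' by move: m_gt0; rewrite def_m muln_gt0 => /andP[].
rewrite def_m totient_coprime 1?coprime_sym ?coprimeXl //.
apply: leq_mul_exp_pred; rewrite ?totient_gt0 ?expn_gt0 ?(prime_gt0 p_pr) //.
  apply: IHm; last by move: m_odd; rewrite def_m oddM => /andP[].
  by rewrite {1}def_m ltn_Pmulr // -(expn0 p) ltn_exp2l ?prime_gt1.
exact: odd_prime_power_le_exp5.
Qed.

Lemma lt_exp5_totient d : 0 < d -> d < 5 ^ totient d.
Proof.
move=> d_gt0; have [m co_2m def_d] := pfactor_coprime (isT : prime 2) d_gt0.
have m_gt0 : 0 < m by move: d_gt0; rewrite def_d muln_gt0 => /andP[].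
have m_odd : odd m by rewrite -coprime2n.
rewrite def_d totient_coprime 1?coprime_sym ?coprimeXl //.
have le_m := odd_le_exp5_totient m_odd.
have x_gt0 : 0 < totient m by rewrite totient_gt0.
case: (logn 2 d) => [|a].
  rewrite muln1 (_ : totient (2 ^ 0) = 1) // muln1.
  by apply: leq_ltn_trans le_m _; rewrite ltn_exp2l // ltn_predL.
rewrite totient_pfactor //= mul1n expnS mulnCA.
have le_2a : 2 ^ a <= 5 ^ (2 ^ a).-1.
  by have := mul4_lt_exp5 (2 ^ a).-1; have := expn_gt0 2 a; lia.
have y_gt0 : 0 < totient m * 2 ^ a by rewrite muln_gt0 x_gt0 expn_gt0.
rewrite -(prednK y_gt0) expnS.
by have := leq_mul_exp_pred (isT : 0 < 5) x_gt0 (expn_gt0 2 a) le_m le_2a; lia.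
Qed.

Lemma cyclo_balancing_dvd d : 1 < d -> cyclo_balancing d %| B d.
Proof.
by move=> d_gt1; rewrite balancing_prod_cyclo ?(ltnW d_gt1) // big_divisors_gt1D1 // dvdn_mulr.
Qed.

Lemma cyclo_balancing_mul_dvd d q : 1 < d -> q \in primes d ->
  cyclo_balancing d * B (d %/ q) %| B d.
Proof.
move=> d_gt1; rewrite mem_primes => /and3P[q_pr d_gt0 q_d].
have dq_gt0 : 0 < d %/ q by rewrite divn_gt0 ?prime_gt0 // dvdn_leq.
have dq_lt_d : d %/ q < d by rewrite ltn_Pdiv ?prime_gt1.
have divisors_dq : perm_eq [seq e <- divisors (d %/ q) | 1 < e]
    [seq e <- divisors d | (1 < e) && (e != d) & e %| d %/ q].
  apply: uniq_perm; rewrite ?filter_uniq ?divisors_uniq // => e.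
  rewrite !mem_filter -!dvdn_divisors //.
  have [e_dq | _] := boolP (e %| d %/ q); last by rewrite !andbF.
  rewrite (dvdn_trans e_dq (dvdn_div q_d)) ltn_eqF /= ?andbT //.
  exact: leq_ltn_trans (dvdn_leq dq_gt0 e_dq) dq_lt_d.
rewrite [B d]balancing_prod_cyclo // big_divisors_gt1D1 //; apply: dvdn_mul => //.
rewrite (bigID (dvdn^~ (d %/ q))) /= dvdn_mulr // balancing_prod_cyclo //.
by rewrite -big_filter (perm_big _ divisors_dq) big_filter.
Qed.

Lemma cyclo_balancing_nonprimitive d q p : 1 < d -> q \in primes d -> prime p ->
  p %| cyclo_balancing d -> p %| B (d %/ q) -> p = q /\ ~~ (p ^ 2 %| cyclo_balancing d).
Proof.
move=> d_gt1 q_d p_pr p_F p_B; have := q_d; rewrite mem_primes => /and3P[q_pr d_gt0 q_dvd_d].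
apply: (prime_dvd_balancing_quotient p_pr q_pr _ p_B) => //.
  by rewrite divn_gt0 ?prime_gt0 // dvdn_leq.
by rewrite [q * _]mulnC divnK // cyclo_balancing_mul_dvd.
Qed.

Lemma dvd_balancing_proper_divisor d m p : 0 < m -> m < d -> p %| B m -> p %| B d ->
  exists2 q, q \in primes d & p %| B (d %/ q).
Proof.
move=> m_gt0 m_lt_d p_Bm p_Bd; set g := gcdn m d.
have g_gt0 : 0 < g by rewrite gcdn_gt0 m_gt0.
have g_d : g %| d := dvdn_gcdr m d.
have p_Bg : p %| B g by rewrite -gcdn_balancing dvdn_gcd p_Bm.
have dg_gt1 : 1 < d %/ g.
  rewrite -(ltn_pmul2r g_gt0) mul1n divnK //.
  exact: leq_ltn_trans (dvdn_leq m_gt0 (dvdn_gcdl m d)) m_lt_d.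
have q_pr := pdiv_prime dg_gt1; have q_dg := pdiv_dvd (d %/ g).
exists (pdiv (d %/ g)).
  by rewrite mem_primes q_pr (ltn_trans m_gt0 m_lt_d) (dvdn_trans q_dg (dvdn_div g_d)).
apply: dvdn_trans p_Bg (balancing_dvd _).
rewrite dvdn_divRL ?(dvdn_trans q_dg (dvdn_div g_d)) //.
by rewrite -{2}(divnK g_d) [g * _]mulnC dvdn_pmul2r.
Qed.

Definition primitive_prime d p : bool :=
  [&& prime p, p %| B d & [forall m : 'I_d, (0 < m) ==> ~~ (p %| B m)]].

Lemma primitive_prime_dvd d m p : 0 < d -> 0 < m ->
  primitive_prime d p -> p %| B m -> d %| m.
Proof.
move=> d_gt0 m_gt0 /and3P[_ p_Bd /forallP p_prim] p_Bm.
have g_gt0 : 0 < gcdn d m by rewrite gcdn_gt0 d_gt0.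
have p_Bg : p %| B (gcdn d m) by rewrite -gcdn_balancing dvdn_gcd p_Bd.
apply/gcdn_idPl/eqP; rewrite eqn_leq dvdn_leq ?dvdn_gcdl //= leqNgt.
by apply/negP => lt_gd; have := p_prim (Ordinal lt_gd); rewrite /= g_gt0 p_Bg.
Qed.

Lemma primitive_prime_inj d1 d2 p : 0 < d1 -> 0 < d2 ->
  primitive_prime d1 p -> primitive_prime d2 p -> d1 = d2.
Proof.
move=> d1_gt0 d2_gt0 prim1 prim2; have p_B d : primitive_prime d p -> p %| B d by case/and3P.
apply/eqP; rewrite eqn_dvd (primitive_prime_dvd d1_gt0 d2_gt0 prim1 (p_B _ prim2)).
exact: primitive_prime_dvd d2_gt0 d1_gt0 prim2 (p_B _ prim1).
Qed.

Lemma has_primitive_prime d : 1 < d -> has (primitive_prime d) (primes (cyclo_balancing d)).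
Proof.
move=> d_gt1; have d_gt0 := ltnW d_gt1; set F := cyclo_balancing d.
have d_lt_F : d < F := leq_trans (lt_exp5_totient d_gt0) (cyclo_balancing_ge d_gt1).
have F_gt0 : 0 < F := leq_ltn_trans (leq0n d) d_lt_F.
apply/negPn/negP => /hasPn nonprimitive.
(* Then every prime of F divides d and divides F only once. *)
suff /(dvdn_leq d_gt0) : F %| d by rewrite leqNgt d_lt_F.
apply/dvdn_partP => // p; rewrite mem_primes => /and3P[p_pr _ p_F].
have p_Bd := dvdn_trans p_F (cyclo_balancing_dvd d_gt1).
have /nonprimitive : p \in primes F by rewrite mem_primes p_pr F_gt0.
rewrite /primitive_prime p_pr p_Bd negb_forall => /existsP[[m m_lt_d]] /=.
rewrite negb_imply negbK => /andP[m_gt0 p_Bm].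
have [q q_d p_Bq] := dvd_balancing_proper_divisor m_gt0 m_lt_d p_Bm p_Bd.
have [eq_pq p2_F] := cyclo_balancing_nonprimitive d_gt1 q_d p_pr p_F p_Bq.
have p_d : p %| d by move: q_d; rewrite mem_primes -eq_pq => /and3P[].
rewrite p_part; move: p2_F; rewrite pfactor_dvdn // -ltnNge ltnS.
by case: (logn p F) => [|[|]] //= _; rewrite expn1.
Qed.

(* Junk value 0 when d <= 1. *)
Definition primitive_prime_of d : nat :=
  let s := primes (cyclo_balancing d) in nth 0 s (find (primitive_prime d) s).

Lemma primitive_prime_ofP d : 1 < d -> primitive_prime d (primitive_prime_of d).
Proof. by move/has_primitive_prime/(nth_find 0). Qed.

Lemma tau_dvd_leq d m : 0 < m -> d %| m -> tau d <= tau m.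
Proof.
move=> m_gt0 d_m; have d_gt0 := dvdn_gt0 m_gt0 d_m.
apply: uniq_leq_size (divisors_uniq d) _ => e; rewrite -!dvdn_divisors // => e_d.
exact: dvdn_trans e_d d_m.
Qed.

Lemma tau_mul_prime p m : prime p -> ~~ (p %| m) -> 0 < m -> 2 * tau m <= tau (p * m).
Proof.
move=> p_pr p_m m_gt0; have pm_gt0 : 0 < p * m by rewrite muln_gt0 prime_gt0.
rewrite /tau mul2n -addnn -[X in _ + X](size_map (muln p)) -size_cat.
apply: uniq_leq_size => [|e].
  rewrite cat_uniq divisors_uniq map_inj_uniq ?divisors_uniq ?andbT /=; last first.
    by move=> x y /(congr1 (divn^~ p)); rewrite !mulKn ?prime_gt0.
  apply/hasPn => _ /mapP[e e_m ->]; rewrite -dvdn_divisors //.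
  by apply: contra p_m => /(dvdn_trans (dvdn_mulr e (dvdnn p))).
rewrite mem_cat -!dvdn_divisors // => /orP[e_m | /mapP[e' e'_m ->]]; first exact: dvdn_mull.
by rewrite dvdn_pmul2l ?prime_gt0 // dvdn_divisors.
Qed.

Lemma exp2_size_le_tau s m : 0 < m -> uniq s -> all prime s -> all (dvdn^~ m) s ->
  2 ^ size s <= tau m.
Proof.
elim: s m => [|p s IHs] m m_gt0 /=; first by rewrite /tau; case: (divisors m) (divisors_id m_gt0).
case/andP=> p_s s_uniq /andP[p_pr s_pr] /andP[p_m s_m].
have [m' co_pm' def_m] := pfactor_coprime p_pr m_gt0.
have m'_gt0 : 0 < m' by move: m_gt0; rewrite def_m muln_gt0 => /andP[].
have s_m' : all (dvdn^~ m') s.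
  apply/allP => r r_s; have r_pr := allP s_pr r r_s.
  move: (allP s_m r r_s); rewrite /= def_m Gauss_dvdl // coprimeXr // prime_coprime //.
  by rewrite dvdn_prime2 //; apply: contraNneq p_s => <-.
have pm'_m : p * m' %| m.
  rewrite {1}def_m mulnC dvdn_pmul2l // -{1}(expn1 p) dvdn_exp2l //.
  by rewrite logn_gt0 mem_primes p_pr m_gt0.
apply: leq_trans (tau_dvd_leq m_gt0 pm'_m); rewrite expnS.
apply: leq_trans (tau_mul_prime p_pr _ m'_gt0); first by rewrite leq_mul2l IHs.
by rewrite -prime_coprime.
Qed.

Lemma size_divisors_gt1 n : 0 < n -> size [seq d <- divisors n | 1 < d] = (tau n).-1.
Proof.
move=> n_gt0; rewrite size_filter /tau -(count_predC (fun d => 1 < d) (divisors n)).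
rewrite (@eq_in_count _ (predC _) (pred1 1)) ?count_uniq_mem ?divisors_uniq ?divisor1 ?addn1 //.
by move=> d; rewrite -dvdn_divisors // => /(dvdn_gt0 n_gt0); case: d => [|[|]].
Qed.

Lemma exp2_tau_le_tau_balancing n : 0 < n -> 2 ^ (tau n).-1 <= tau (B n).
Proof.
move=> n_gt0; set D := [seq d <- divisors n | 1 < d].
have D_P d : d \in D -> (d %| n) && (1 < d) by rewrite mem_filter -dvdn_divisors // andbC.
rewrite -size_divisors_gt1 // -(size_map primitive_prime_of).
apply: exp2_size_le_tau; rewrite ?balancing_gt0 //.
- rewrite map_inj_in_uniq ?filter_uniq ?divisors_uniq //.
  move=> d1 d2 /D_P/andP[_ d1_gt1] /D_P/andP[_ d2_gt1] eq_p.
  apply: (primitive_prime_inj (ltnW d1_gt1) (ltnW d2_gt1) (primitive_prime_ofP d1_gt1)).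
  by rewrite eq_p primitive_prime_ofP.
- by apply/allP => _ /mapP[d /D_P/andP[_ d_gt1] ->]; case/and3P: (primitive_prime_ofP d_gt1).
apply/allP => _ /mapP[d /D_P/andP[d_n d_gt1] ->].
case/and3P: (primitive_prime_ofP d_gt1) => _ p_Bd _.
exact: dvdn_trans p_Bd (balancing_dvd d_n).
Qed.

Theorem theorem3p2 (n : nat) : 1 <= n -> balancing (tau n %/ 3) < tau (balancing n).
Proof.
move=> n_gt0; apply: leq_trans (balancing_lt_exp2 _) _.
apply: leq_trans (exp2_tau_le_tau_balancing n_gt0).
by rewrite leq_pexp2l // -!subn1 leq_sub2r // mulnC leq_divM.
Qed.
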